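(* For every $k\in\mathbb N$ and $\mu\in\{0,\dots,L-1\}$, let $Q$ be a matrix whose columns form an orthonormal basis of $\operatorname{range}(W_{k,\mu+1})$. Then $$f(v_{k,\mu+1})-f(v_{k,\mu})=-\frac{1}{2\|b\|^2}\big\langle Q(Q^TAQ)^{-1}Q^Tr_{k,\mu},\,r_{k,\mu}\big\rangle .$$
   Context: Let $\mathcal V=\bigotimes_{\nu=1}^d\mathbb R^{m_\nu}\cong\mathbb R^N$ with the Euclidean inner product $\langle\cdot,\cdot\rangle$ and norm $\|\cdot\|$. Let $A\in\mathbb R^{N\times N}$ be symmetric positive definite, $b\in\mathcal V\setminus\{0\}$, $f(v)=\frac{1}{\|b\|^2}(\frac12\langle Av,v\rangle-\langle b,v\rangle)$. Let $L\ge d$, $P_1,\dots,P_L$ finite-dimensional real inner product spaces, $P=P_1\times\dots\times P_L$, $U:P\to\mathcal V$ multilinear, $F=f\circ U$. For $\mathbf p\in P$, $W_{\mu,\mathbf p^{[\mu]}}:P_\mu\to\mathcal V$ is $q\mapsto U(p_1,\dots,p_{\mu-1},q,p_{\mu+1},\dots,p_L)$; $X^T$ transpose, $X^+$ pseudoinverse (w.r.t. orthonormal bases). ALS: choose $\mathbf p_1=(p_1^1,\dots,p_L^1)\in P$; for $k=1,2,\dots$ and $\mu=1,\dots,L$ in order, $W_{k,\mu}:=W_{\mu,(p_1^{k+1},\dots,p_{\mu-1}^{k+1},p_{\mu+1}^k,\dots,p_L^k)}$ and $p_\mu^{k+1}:=(W_{k,\mu}^TAW_{k,\mu})^+W_{k,\mu}^Tb$.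 For $\mu\in\{0,\dots,L\}$ put $v_{k,\mu}=U(p_1^{k+1},\dots,p_\mu^{k+1},p_{\mu+1}^k,\dots,p_L^k)$ and $r_{k,\mu}=b-Av_{k,\mu}$. *)

From HB Require Import structures.
From mathcomp Require Import all_boot all_order all_algebra.
From mathcomp Require Import reals.
From Stdlib Require Import ClassicalEpsilon.
Set Implicit Arguments. Unset Strict Implicit. Unset Printing Implicit Defensive.
Import Order.TTheory GRing.Theory Num.Theory.
Local Open Scope ring_scope.

Section ALS.
Variable R : realType.

Definition dotv (N : nat) (x y : 'cV[R]_N) : R := (x^T *m y) 0 0.

Definition spd (N : nat) (A : 'M[R]_N) : Prop :=
  A^T = A /\ forall x : 'cV[R]_N, x != 0 -> 0 < dotv x (A *m x).

Definition fq (N : nat) (A : 'M[R]_N) (b v : 'cV[R]_N) : R :=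
  (dotv b b)^-1 * (2^-1 * dotv (A *m v) v - dotv b v).

Definition penrose (m n : nat) (X : 'M[R]_(m, n)) (Y : 'M[R]_(n, m)) : Prop :=
  [/\ X *m Y *m X = X, Y *m X *m Y = Y,
      (X *m Y)^T = X *m Y & (Y *m X)^T = Y *m X].

Definition pinv (m n : nat) (X : 'M[R]_(m, n)) : 'M[R]_(n, m) :=
  epsilon (inhabits 0) (penrose X).

(* Parameter space P = P_1 x ... x P_L, with P_i identified with R^(n i)
   through orthonormal bases. *)
Definition param (L : nat) (n : 'I_L -> nat) := forall i : 'I_L, 'cV[R]_(n i).

Definition multilinear (L N : nat) (n : 'I_L -> nat)
    (U : param n -> 'cV[R]_N) : Prop :=
  forall (p : param n) (mu : 'I_L),
    linear (fun q : 'cV[R]_(n mu) => U (dfwith p q)).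

(* Matrix of W_{mu,p^[mu]} : q |-> U(p_1,..,q,..,p_L). *)
Definition Wmat (L N : nat) (n : 'I_L -> nat) (U : param n -> 'cV[R]_N)
    (p : param n) (mu : 'I_L) : 'M[R]_(N, n mu) :=
  \matrix_(i, j) U (dfwith p (delta_mx j 0 : 'cV[R]_(n mu))) i 0.

(* (p_1^{k+1},...,p_mu^{k+1}, p_{mu+1}^k, ..., p_L^k), 0-based: the first
   mu coordinates are taken from iterate k+1. *)
Definition mixp (L : nat) (n : 'I_L -> nat) (p : nat -> param n)
    (k mu : nat) : param n :=
  fun i => if (i < mu)%N then p k.+1 i else p k i.

(* ALS iteration (components updated in order mu = 1..L, 0-based here). *)
Definition ALS_iter (L N : nat) (n : 'I_L -> nat) (U : param n -> 'cV[R]_N)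
    (A : 'M[R]_N) (b : 'cV[R]_N) (p : nat -> param n) : Prop :=
  forall k : nat, (1 <= k)%N -> forall mu : 'I_L,
    let W := Wmat U (mixp p k mu) mu in
    p k.+1 mu = pinv (W^T *m A *m W) *m W^T *m b.

End ALS.

(* Write [W = Q C] with [C] right invertible.  Then every generalized inverse
   of [W^T A W = C^T (Q^T A Q) C] yields [W (W^T A W)^+ W^T = P] with
   [P = Q (Q^T A Q)^-1 Q^T], so the ALS update is [v_{k,mu+1} = P b], while
   [v_{k,mu} = Q z] lies in the range of [W].  As [P] is symmetric with
   [P A P = P] and [P A Q = Q], expanding [f] at both points and using
   [P r = P b - Q z] gives the identity. *)

From HB Require Import structures.
From mathcomp Require Import all_boot all_order all_algebra.
From mathcomp Require Import reals.
From mathcomp Require Import ring.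
From Stdlib Require Import ClassicalEpsilon FunctionalExtensionality.
Set Implicit Arguments. Unset Strict Implicit. Unset Printing Implicit Defensive.
Import Order.TTheory GRing.Theory Num.Theory.
Local Open Scope ring_scope.

Section QuadraticForms.
Variable R : realType.

Lemma dotvC N (x y : 'cV[R]_N) : dotv x y = dotv y x.
Proof. by rewrite /dotv -[y in LHS]trmxK -trmx_mul mxE. Qed.

Lemma dotvMl N M (X : 'M[R]_(N, M)) x y : dotv (X *m x) y = dotv x (X^T *m y).
Proof. by rewrite /dotv trmx_mul mulmxA. Qed.

Lemma dotvBl N (x y z : 'cV[R]_N) : dotv (x - y) z = dotv x z - dotv y z.
Proof. by rewrite /dotv linearB /= mulmxBl !mxE. Qed.

Lemma dotvBr N (x y z : 'cV[R]_N) : dotv z (x - y) = dotv z x - dotv z y.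
Proof. by rewrite /dotv mulmxBr !mxE. Qed.

Lemma dotv_eq0 N (x : 'cV[R]_N) : dotv x x = 0 -> x = 0.
Proof.
rewrite /dotv mxE => x2_0; apply/colP => i; rewrite mxE.
have sq_ge0 j : predT j -> 0 <= x^T 0 j * x j 0 by rewrite mxE -expr2 sqr_ge0.
have /eqP := psumr_eq0P sq_ge0 x2_0 (isT : predT i).
by rewrite mxE mulf_eq0 orbb => /eqP.
Qed.

(* [P] is an [A]-orthogonal projector onto a space containing [y], and
   [P b] minimizes [fq A b] on that space. *)
Lemma fq_sub_projector N (A P : 'M[R]_N) (b y : 'cV[R]_N) :
  A^T = A -> P^T = P -> P *m A *m P = P -> P *m A *m y = y ->
  fq A b (P *m b) - fq A b y =
    - ((2 * dotv b b)^-1 * dotv (P *m (b - A *m y)) (b - A *m y)).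
Proof.
move=> AT PT PAP PAy.
have xAx : dotv (A *m (P *m b)) (P *m b) = dotv b (P *m b).
  by rewrite !dotvMl AT PT !mulmxA PAP.
have xAy : dotv (P *m b) (A *m y) = dotv b y.
  by rewrite dotvMl PT !mulmxA PAy.
rewrite /fq mulmxBr (mulmxA P) PAy dotvBl !dotvBr xAx xAy (dotvC (P *m b))
  (dotvC y) [dotv y _]dotvC invfM.
by move: (dotv b b)^-1 (dotv b (P *m b)) (dotv b y) (dotv (A *m y) y)
  => c x1 x2 x3; field.
Qed.

End QuadraticForms.

Lemma eqmx_tr_factor (F : fieldType) N s t
    (Q : 'M[F]_(N, s)) (W : 'M[F]_(N, t)) :
  Q^T *m Q = 1%:M -> (Q^T == W^T)%MS ->
  exists C D, W = Q *m C /\ C *m D = 1%:M.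
Proof.
move=> QQ /andP[/submxP[X QX] /submxP[Y WY]].
exists Y^T, X^T; split; first by rewrite -[W]trmxK WY trmx_mul trmxK.
by rewrite -trmx_mul -[X *m Y]mulmx1 -QQ mulmxA -(mulmxA X) -WY -QX QQ trmx1.
Qed.

Section Congruence.
Variable R : realType.

Lemma spd_congr_unitmx N s (A : 'M[R]_N) (Q : 'M[R]_(N, s)) :
  spd A -> Q^T *m Q = 1%:M -> Q^T *m A *m Q \in unitmx.
Proof.
move=> [_ Apos] QQ; rewrite -row_free_unit; apply: inj_row_free => u uG0.
have Qu0 : Q *m u^T = 0.
  apply/eqP; apply: contraT => /Apos.
  rewrite dotvMl /dotv trmxK !mulmxA -(mulmxA u) -(mulmxA u) uG0.
  by rewrite !mul0mx mxE ltxx.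
by apply: trmx_inj; rewrite trmx0 -[u^T]mul1mx -QQ -mulmxA Qu0 mulmx0.
Qed.

Lemma mulmx_tr_unitmx s t (C : 'M[R]_(s, t)) (D : 'M[R]_(t, s)) :
  C *m D = 1%:M -> C *m C^T \in unitmx.
Proof.
move=> CD; rewrite -row_free_unit; apply: inj_row_free => u uCC0.
have uC0 : (u *m C)^T = 0.
  apply: dotv_eq0.
  by rewrite /dotv trmxK trmx_mul mulmxA -(mulmxA u) uCC0 mul0mx mxE.
by rewrite -[u]mulmx1 -CD mulmxA -[u *m C]trmxK uC0 trmx0 !mul0mx.
Qed.

Definition rpinvmx s t (C : 'M[R]_(s, t)) : 'M[R]_(t, s) :=
  C^T *m invmx (C *m C^T).

Lemma congr_inv_projector N s (A : 'M[R]_N) (Q : 'M[R]_(N, s)) :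
  A^T = A -> Q^T *m A *m Q \in unitmx ->
  let P := Q *m invmx (Q^T *m A *m Q) *m Q^T in
  [/\ P^T = P, P *m A *m P = P & P *m A *m Q = Q].
Proof.
move=> AT Gu P.
have PAQ : P *m A *m Q = Q.
  by rewrite /P -!mulmxA (mulmxA Q^T) (mulVmx Gu) mulmx1.
split=> //; last by rewrite {2}/P !mulmxA PAQ.
by rewrite /P !trmx_mul trmxK trmx_inv !trmx_mul trmxK AT !mulmxA.
Qed.

Section PseudoInverse.
Variables (s t : nat) (C : 'M[R]_(s, t)) (D : 'M[R]_(t, s)) (G : 'M[R]_s).
Hypotheses (CD : C *m D = 1%:M) (Gu : G \in unitmx).

Lemma penrose_congr :
  penrose (C^T *m G *m C) (rpinvmx C *m invmx G *m (rpinvmx C)^T).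
Proof.
have Ku := mulmx_tr_unitmx CD.
set E := rpinvmx C.
have CE : C *m E = 1%:M by rewrite /rpinvmx mulmxA (mulmxV Ku).
have ECC : E *m C *m C^T = C^T.
  by rewrite -mulmxA /rpinvmx -mulmxA (mulVmx Ku) mulmx1.
have ST : (E *m C)^T = E *m C.
  by rewrite trmx_mul /rpinvmx trmx_mul trmx_inv trmx_mul !trmxK mulmxA.
clearbody E.
have MY : C^T *m G *m C *m (E *m invmx G *m E^T) = E *m C.
  by rewrite !mulmxA -(mulmxA _ C E) CE mulmx1 (mulmxK Gu) -trmx_mul ST.
have YM : E *m invmx G *m E^T *m (C^T *m G *m C) = E *m C.
  by rewrite !mulmxA -(mulmxA _ E^T) -trmx_mul CE trmx1 mulmx1 (mulmxKV Gu).
split; rewrite ?MY ?YM ?ST //.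
- by rewrite !mulmxA ECC.
- by rewrite !mulmxA -(mulmxA E C E) CE mulmx1.
Qed.

Lemma pinv_congr : C *m pinv (C^T *m G *m C) *m C^T = invmx G.
Proof.
set Z := pinv _.
have [MZM _ _ _] : penrose (C^T *m G *m C) Z.
  by apply: epsilon_spec; exact: (ex_intro _ _ penrose_congr).
have DC : D^T *m C^T = 1%:M by rewrite -trmx_mul CD trmx1.
have GZG : G *m (C *m Z *m C^T) *m G = G.
  have := congr1 (fun X => D^T *m X *m D) MZM.
  by rewrite /= !mulmxA DC !mul1mx -!(mulmxA _ C D) CD !mulmx1.
by rewrite -[C *m Z *m C^T](mulKmx Gu) -[G *m _](mulmxK Gu) GZG mulKmx.
Qed.

End PseudoInverse.
End Congruence.

Section ALS.
Variable R : realType.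

Lemma mulmx_Wmat (L N : nat) (n : 'I_L -> nat) (U : param R n -> 'cV[R]_N)
    (p : param R n) (mu : 'I_L) (q : 'cV[R]_(n mu)) :
  multilinear U -> U (dfwith p q) = Wmat U p mu *m q.
Proof.
move=> /(_ p mu) linU.
pose F : {linear 'cV[R]_(n mu) -> 'cV[R]_N} :=
  HB.pack (fun q => U (dfwith p q)) (GRing.isLinear.Build _ _ _ _ _ linU).
rewrite -[U _]/(F q) [q in F q]matrix_sum_delta linear_sum.
apply/matrixP => i j; rewrite (ord1 j) !mxE summxE.
by apply: eq_bigr => l _; rewrite big_ord1 linearZ !mxE mulrC.
Qed.

Lemma dfwith_id (I : eqType) (T : I -> Type) (f : forall i, T i) (i : I) :
  dfwith f (f i) = f.
Proof. by apply: functional_extensionality_dep => j; case: dfwithP. Qed.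

Lemma mixpS L (n : 'I_L -> nat) (p : nat -> param R n) k (mu : 'I_L) :
  mixp p k mu.+1 = dfwith (mixp p k mu) (p k.+1 mu).
Proof.
apply: functional_extensionality_dep => i.
case: dfwithP => [|j mu_j]; first by rewrite /mixp ltnSn.
rewrite eq_sym in mu_j.
by rewrite /mixp ltnS leq_eqVlt (negbTE (mu_j : (j : nat) != mu)).
Qed.

End ALS.

Theorem mainTheorem7 (R : realType) (d : nat) (m : 'I_d -> nat) (N L : nat)
    (HN : N = (\prod_(nu < d) m nu)%N) (HLd : (d <= L)%N)
    (A : 'M[R]_N) (b : 'cV[R]_N) (n : 'I_L -> nat)
    (U : param R n -> 'cV[R]_N) (p : nat -> param R n) :
  spd A -> b != 0 -> multilinear U -> ALS_iter U A b p ->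
  forall (k : nat), (1 <= k)%N -> forall (mu : 'I_L),
    let W := Wmat U (mixp p k mu) mu in
    let v := fun j : nat => U (mixp p k j) in
    let r := b - A *m v mu in
    forall (s : nat) (Q : 'M[R]_(N, s)),
      Q^T *m Q = 1%:M -> (Q^T == W^T)%MS ->
      fq A b (v mu.+1) - fq A b (v mu) =
        - ((2 * dotv b b)^-1 *
           dotv (Q *m invmx (Q^T *m A *m Q) *m Q^T *m r) r).
Proof.
move=> spdA _ linU ALS k k1 mu W v r s Q QQ QW.
have AT : A^T = A by case: spdA.
have [C [D [WQC CD]]] := eqmx_tr_factor QQ QW.
have Gu := spd_congr_unitmx spdA QQ.
have [PT PAP PAQ] := congr_inv_projector AT Gu.
set P := Q *m _ *m Q^T in PT PAP PAQ *.
have WZW : W *m pinv (W^T *m A *m W) *m W^T = P.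
  have -> : W^T *m A *m W = C^T *m (Q^T *m A *m Q) *m C
    by rewrite WQC trmx_mul !mulmxA.
  by rewrite WQC trmx_mul mulmxA -(mulmxA Q C) -(mulmxA Q) (pinv_congr CD Gu).
have vS : v mu.+1 = P *m b.
  by rewrite /v mixpS mulmx_Wmat // (ALS k k1 mu) -/W !mulmxA WZW.
have vQ : v mu = Q *m (C *m mixp p k mu mu).
  by rewrite /v -{1}(dfwith_id (mixp p k mu) mu) mulmx_Wmat // -/W WQC mulmxA.
by rewrite /r vS vQ; apply: fq_sub_projector; rewrite // mulmxA PAQ.
Qed.
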